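(* If $P_1$ and $P_2$ are disjoint signed posets then $Y_{P_1\sqcup P_2}=Y_{P_1}Y_{P_2}$; consequently $\mathbb{Y}$ is closed under multiplication and $\phi(fg)=\phi(f)\phi(g)$ for all $f,g\in\mathbb{Y}$.
   Context: A signed graph is a finite graph (loops and multiple edges allowed) with $\mathrm{sgn}:E\to\{+,-\}$; a coloring $\kappa:V\to\mathbb{Z}$ is proper if $\kappa(u)\ne\mathrm{sgn}(e)\kappa(v)$ for every edge $e$ with endpoints $u,v$. An orientation assigns to each half-edge (a loop has two) an arrow toward or away from the vertex, such that on a positive edge exactly one of the two arrows points toward its vertex and on a negative edge both point toward or both point away. A cycle is a closed walk in which, considering only the edges of the walk, every vertex of the walk has at least one arrow pointing into it and one pointing out of it; an orientation is acyclic if it has no cycle; a sink is a vertex all of whose incident arrows point toward it (an isolated vertex is a sink). A signed poset is an acyclic orientation $P$ of a signed graph; $P_1\sqcup P_2$ denotes the orientation of the disjoint union. A proper coloring $\kappa$ preserves $P$ if for every edge $e$ and each endpoint $v$ of $e$, with $u$ the other endpoint ($u=v$ for a loop), the arrow of $P$ at the incidence of $e$ with $v$ points toward $v$ iff $\kappa(v)>\mathrm{sgn}(e)\kappa(u)$. $Y_P=\sum_\kappa\prod_v x_{\kappa(v)}$ over proper colorings preserving $P$ (variables $x_i$, $i\in\mathbb{Z}$); $\mathbb{Y}$ is the $\mathbb{Q}$-span of all $Y_P$; $\phi:\mathbb{Y}\to\mathbb{Q}[t]$ is the (unique) $\mathbb{Q}$-linear map with $\phi(Y_P)=t^{\mathrm{sink}(P)}$,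 $\mathrm{sink}(P)$ being the number of sinks of $P$ (its existence is established in the paper). *)

From HB Require Import structures.
From mathcomp Require Import all_boot all_order all_algebra.
Set Implicit Arguments. Unset Strict Implicit. Unset Printing Implicit Defensive.
Import Order.TTheory GRing.Theory Num.Theory.
Local Open Scope ring_scope.

(* Each edge e has
   two ends (half-edges) indexed by a boolean c; [send e c] is the vertex at
   end c.  A loop is an edge with [send e false = send e true].
   [ssgn e = true] means the edge is positive, [false] means negative. *)
Record sgraph := SGraph {
  svert : finType;
  sedge : finType;
  send : sedge -> bool -> svert;
  ssgn : sedge -> bool }.

(* An (arrow assignment on the half-edges): [o e c = true] iff the arrow at
   the incidence of e at its end c points toward the vertex [send e c]. *)
Definition arrows (G : sgraph) := sedge G -> bool -> bool.

Definition is_orientation (G : sgraph) (o : arrows G) : Prop :=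
  forall e : sedge G,
    if ssgn e then o e false != o e true else o e false == o e true.

(* A step (e, c) of a walk traverses e from its end c to its end ~~c. *)
Definition step_src (G : sgraph) (s : sedge G * bool) := send s.1 s.2.
Definition step_dst (G : sgraph) (s : sedge G * bool) := send s.1 (~~ s.2).

Definition closed_walk (G : sgraph) (w : seq (sedge G * bool)) : bool :=
  (w != [::]) && cycle (fun s t => step_dst s == step_src t) w.

Definition is_cycle (G : sgraph) (o : arrows G) (w : seq (sedge G * bool)) : Prop :=
  closed_walk w /\
  forall v, v \in [seq step_src s | s <- w] ->
    (exists e c, e \in [seq s.1 | s <- w] /\ send e c = v /\ o e c = true) /\
    (exists e c, e \in [seq s.1 | s <- w] /\ send e c = v /\ o e c = false).

Definition acyclic (G : sgraph) (o : arrows G) : Prop :=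
  forall w, ~ is_cycle o w.

Definition signed_poset (G : sgraph) (o : arrows G) : Prop :=
  is_orientation o /\ acyclic o.

(* sinks: all incident arrows point toward v (isolated vertices are sinks) *)
Definition is_sink (G : sgraph) (o : arrows G) (v : svert G) : bool :=
  [forall e, forall c, (send e c == v) ==> o e c].

Definition nsinks (G : sgraph) (o : arrows G) : nat := #|[pred v | is_sink o v]|.

Definition gunion (G1 G2 : sgraph) : sgraph :=
  @SGraph (svert G1 + svert G2)%type (sedge G1 + sedge G2)%type
    (fun e c => match e with inl e1 => inl (send e1 c) | inr e2 => inr (send e2 c) end)
    (fun e => match e with inl e1 => ssgn e1 | inr e2 => ssgn e2 end).

Definition aunion (G1 G2 : sgraph) (o1 : arrows G1) (o2 : arrows G2)
  : arrows (gunion G1 G2) :=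
  fun e c => match e with inl e1 => o1 e1 c | inr e2 => o2 e2 c end.

Definition sgnval (G : sgraph) (e : sedge G) (x : int) : int :=
  if ssgn e then x else - x.

Definition proper (G : sgraph) (k : svert G -> int) : bool :=
  [forall e, forall c, k (send e c) != sgnval e (k (send e (~~ c)))].

Definition preserves (G : sgraph) (o : arrows G) (k : svert G -> int) : bool :=
  [forall e, forall c, o e c == (sgnval e (k (send e (~~ c))) < k (send e c))].

(* A monomial is represented by a list m of integers (the multiset of indices;
   m stands for \prod_(i <- m) x_i); a series is its coefficient function.
   All series considered here are invariant under permutation of m. *)
Definition series := seq int -> rat.

(* coefficient of the monomial m in Y_P: number of proper colorings preserving
   o whose multiset of colours is m (such colourings take values in m). *)
Definition Ycoef (G : sgraph) (o : arrows G) (m : seq int) : nat :=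
  #|[set kap : {ffun svert G -> seq_sub m} |
      let k := fun v => ssval (kap v) in
      [&& proper k, preserves o k & perm_eq [seq k v | v : svert G] m]]|.

Definition Y (G : sgraph) (o : arrows G) : series := fun m => (Ycoef o m)%:R.

(* all ways of splitting the multiset m into two sub-multisets
   (each split listed once, in sorted normal form) *)
Definition isort (s : seq int) := sort (fun x y : int => x <= y) s.
Definition splits (m : seq int) : seq (seq int * seq int) :=
  undup [seq (isort (mask (val b) m), isort (mask (map negb (val b)) m))
        | b <- enum {: (size m).-tuple bool}].

(* product of series (for permutation-invariant series) *)
Definition smul (f g : series) : series :=
  fun m => \sum_(p <- splits m) f p.1 * g p.2.

Definition inY (f : series) : Prop :=
  exists (n : nat) (a : 'I_n -> rat) (G : 'I_n -> sgraph)
         (o : forall i, arrows (G i)),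
    (forall i, signed_poset (o i)) /\
    f = (fun m => \sum_(i < n) a i * Y (o i) m).

(* A coloring of P1 ⊔ P2 is a pair of colorings of P1 and P2; it is proper and
   preserves P1 ⊔ P2 iff both halves do, and its multiset of colours is the union of
   theirs.  So the coefficient of a monomial in Y_{P1 ⊔ P2} is a sum, over the ways of
   splitting the monomial in two, of products of coefficients of Y_{P1} and Y_{P2}.
   A closed walk never leaves a connected component, so P1 ⊔ P2 is again acyclic, and
   its sinks are those of P1 together with those of P2; hence the product of two
   generators Y_P is a generator and phi is multiplicative on generators.
   Bilinearity of the product extends both facts to all of the span. *)

From Pilot Require Import Defs.
From mathcomp Require Import all_boot all_order all_algebra.
From Stdlib Require Import FunctionalExtensionality.
Import Order.TTheory GRing.Theory Num.Theory.
Set Implicit Arguments. Unset Strict Implicit. Unset Printing Implicit Defensive.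
Local Open Scope ring_scope.

Lemma perm_mask_negb (T : eqType) (b : bitseq) (s : seq T) : size b = size s ->
  perm_eq (mask b s ++ mask (map negb b) s) s.
Proof.
elim: s b => [|x s IHs] [|[] b] //= [/IHs eq_s]; first by rewrite perm_cons.
by rewrite -cat1s perm_catCA perm_cons.
Qed.

Lemma perm_cat_mask (T : eqType) (s1 s2 s : seq T) : perm_eq (s1 ++ s2) s ->
  exists2 b : bitseq, size b = size s &
    perm_eq s1 (mask b s) && perm_eq s2 (mask (map negb b) s).
Proof.
move=> eq_s.
have /count_maskP[b size_b eq_s1] : forall x, (count_mem x s1 <= count_mem x s)%N.
  by move=> x; rewrite -(permP eq_s) count_cat leq_addr.
exists b => //; rewrite eq_s1 -(perm_cat2l (mask b s)).
by rewrite (permPr (perm_mask_negb size_b)) -(permPr eq_s) perm_cat2r perm_sym.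
Qed.

Lemma isort_eqP (s1 s2 : seq int) : reflect (isort s1 = isort s2) (perm_eq s1 s2).
Proof. by apply: perm_sortP; [exact: le_total | exact: le_trans | exact: le_anti]. Qed.

Lemma perm_isortr (s1 s2 : seq int) : perm_eq s1 (isort s2) = perm_eq s1 s2.
Proof. by rewrite perm_sym /isort perm_sort perm_sym. Qed.

Lemma mem_splits (m s1 s2 : seq int) :
  ((isort s1, isort s2) \in splits m) = perm_eq (s1 ++ s2) m.
Proof.
rewrite mem_undup; apply/mapP/idP => [[b _ [/isort_eqP eq1 /isort_eqP eq2]] |].
  by rewrite (permPl (perm_cat eq1 eq2)) perm_mask_negb ?size_tuple.
case/perm_cat_mask=> b /eqP size_b /andP[eq1 eq2].
by exists (Tuple size_b); rewrite ?mem_enum //; congr pair; apply/isort_eqP.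
Qed.

Lemma perm_splits (m : seq int) p : p \in splits m -> perm_eq (p.1 ++ p.2) m.
Proof.
rewrite mem_undup => /mapP[b _ ->]; apply: perm_trans (perm_mask_negb (size_tuple b)).
by apply: perm_cat; rewrite perm_sort.
Qed.

Lemma count_splits (m s1 s2 : seq int) :
  count (fun p => perm_eq s1 p.1 && perm_eq s2 p.2) (splits m) = perm_eq (s1 ++ s2) m.
Proof.
rewrite -mem_splits -count_uniq_mem ?undup_uniq //; apply: eq_in_count => p.
rewrite mem_undup => /mapP[b _ ->] /=; rewrite !perm_isortr xpair_eqE.
by congr andb; rewrite eq_sym; apply/isort_eqP/eqP.
Qed.

Lemma sum_splits (b1 b2 : bool) (m s1 s2 : seq int) :
  (\sum_(p <- splits m) (b1 && perm_eq s1 p.1) * (b2 && perm_eq s2 p.2))%N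
  = [&& b1, b2 & perm_eq (s1 ++ s2) m].
Proof.
case: b1 b2 => [] [] /=; try by rewrite big1 // => p _; rewrite ?muln0.
under eq_bigr => p _ do rewrite mulnb.
by rewrite -count_splits -sum1_count [RHS]big_mkcond.
Qed.

Section Colorings.
Variables (G : sgraph) (o : arrows G).

Definition Ycoloring (m : seq int) (k : svert G -> int) : bool :=
  [&& Defs.proper k, preserves o k & perm_eq [seq k v | v : svert G] m].

(* [Ycoef o m] is [Ycoef_in m m]; a larger palette [M] lets the colorings of the
   two halves of a disjoint union be drawn from the same palette. *)
Definition Ycoef_in (M m : seq int) : nat :=
  #|[set kap : {ffun svert G -> seq_sub M} | Ycoloring m (fun v => ssval (kap v))]|.

Lemma Ycoef_in_sum (M m : seq int) :
  Ycoef_in M m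
  = (\sum_(kap : {ffun svert G -> seq_sub M}) Ycoloring m (fun v => ssval (kap v)))%N.
Proof. by rewrite /Ycoef_in cardsE -sum1_card big_mkcond. Qed.

Lemma Ycoef_inE (M m : seq int) : {subset m <= M} -> Ycoef_in M m = Ycoef o m.
Proof.
move=> sub_mM.
pose emb (kap : {ffun svert G -> seq_sub m}) : {ffun svert G -> seq_sub M} :=
  [ffun v => SeqSub (sub_mM _ (ssvalP (kap v)))].
have emb_inj : injective emb.
  move=> k1 k2 /ffunP eq_emb; apply/ffunP => v; apply/val_inj.
  by have := eq_emb v; rewrite !ffunE => -[].
have val_emb kap : (fun v => ssval (emb kap v)) = (fun v => ssval (kap v)).
  by apply: functional_extensionality => v; rewrite ffunE.
rewrite /Ycoef -(card_imset _ emb_inj); congr #|pred_of_set _|.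
apply/setP => kap; rewrite inE; apply/idP/imsetP => [col_kap|[k]]; last first.
  by rewrite inE => col_k ->; rewrite val_emb.
have in_m v : ssval (kap v) \in m.
  by case/and3P: col_kap => _ _ /perm_mem <-; apply: map_f; rewrite mem_enum.
exists [ffun v => SeqSub (in_m v)].
  rewrite inE; congr (Ycoloring m _) : col_kap.
  by apply: functional_extensionality => v; rewrite ffunE.
by apply/ffunP => v; rewrite !ffunE; apply/val_inj.
Qed.

End Colorings.

Definition ffun_join (A B T : finType) (f : {ffun A -> T}) (g : {ffun B -> T}) :
    {ffun A + B -> T} :=
  [ffun x => match x with inl a => f a | inr b => g b end].

Lemma big_ffun_sumType (R : Type) (idx : R) (op : Monoid.com_law idx)
    (A B T : finType) (F : {ffun A + B -> T} -> R) :
  \big[op/idx]_(h : {ffun A + B -> T}) F h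
  = \big[op/idx]_(f : {ffun A -> T}) \big[op/idx]_(g : {ffun B -> T}) F (ffun_join f g).
Proof.
have join_bij : bijective (fun fg : {ffun A -> T} * {ffun B -> T} => ffun_join fg.1 fg.2).
  exists (fun h : {ffun A + B -> T} =>
    ([ffun a => h (inl a)] : {ffun A -> T}, [ffun b => h (inr b)] : {ffun B -> T})).
    by move=> [f g]; congr pair; apply/ffunP => x; rewrite !ffunE.
  by move=> h; apply/ffunP => -[a|b]; rewrite !ffunE.
by rewrite (reindex _ (onW_bij _ join_bij)) pair_bigA.
Qed.

Lemma nsinksE (G : sgraph) (o : arrows G) : nsinks o = (\sum_v is_sink o v)%N.
Proof. by rewrite /nsinks -sum1_card big_mkcond. Qed.

Lemma is_cycle_map (G H : sgraph) (oG : arrows G) (oH : arrows H)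
    (fe : sedge G -> sedge H) (fv : svert G -> svert H) :
  injective fv -> (forall e c, send (fe e) c = fv (send e c)) ->
  (forall e c, oH (fe e) c = oG e c) ->
  forall w, is_cycle oH [seq (fe s.1, s.2) | s <- w] -> is_cycle oG w.
Proof.
move=> fv_inj send_fe o_fe w [/andP[nz_w walk_w] arrows_w]; split.
  have step_fe : relpre (fun s => (fe s.1, s.2)) (fun s t => step_dst s == step_src t)
      =2 (fun s t => step_dst s == step_src t).
    by move=> s t; rewrite /= /step_dst /step_src /= !send_fe (inj_eq fv_inj).
  rewrite /closed_walk -(eq_cycle step_fe) -cycle_map walk_w andbT.
  by case: w nz_w {walk_w arrows_w}.
move=> v v_w.
have pull b : (exists e c, e \in [seq s.1 | s <- [seq (fe s.1, s.2) | s <- w]] /\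
                            send e c = fv v /\ oH e c = b) ->
    exists e c, e \in [seq s.1 | s <- w] /\ send e c = v /\ oG e c = b.
  move=> [_ [c [/mapP[_ /mapP[s s_w ->] ->] [send_e o_e]]]].
  exists s.1, c; split; first exact: map_f.
  by split; [apply: fv_inj; rewrite -send_fe | rewrite -o_fe].
have fv_w : fv v \in [seq step_src s | s <- [seq (fe s.1, s.2) | s <- w]].
  case/mapP: v_w => s s_w ->; rewrite -map_comp.
  by apply/mapP; exists s; rewrite //= /step_src send_fe.
by have [/pull in_v /pull out_v] := arrows_w _ fv_w.
Qed.

Definition on_left (A B : Type) (s : (A + B) * bool) : bool :=
  if s.1 is inl _ then true else false.

Lemma all_on_left (A B : Type) (w : seq ((A + B) * bool)) :
  all (@on_left A B) w -> exists w1, w = [seq (inl s.1, s.2) | s <- w1].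
Proof.
elim: w => [|[[a|b] c] w IHw] //=; first by exists [::].
by case/IHw=> w1 ->; exists ((a, c) :: w1).
Qed.

Lemma all_on_right (A B : Type) (w : seq ((A + B) * bool)) :
  all (predC (@on_left A B)) w -> exists w2, w = [seq (inr s.1, s.2) | s <- w2].
Proof.
elim: w => [|[[a|b] c] w IHw] //=; first by exists [::].
by case/IHw=> w2 ->; exists ((b, c) :: w2).
Qed.

Section Union.
Variables (G1 G2 : sgraph) (o1 : arrows G1) (o2 : arrows G2).
Implicit Type k : svert (gunion G1 G2) -> int.

Lemma proper_union k : Defs.proper k = Defs.proper (k \o inl) && Defs.proper (k \o inr).
Proof.
apply/forallP/andP => [col | [/forallP col1 /forallP col2]].
  by split; apply/forallP => e; [apply: (col (inl e)) | apply: (col (inr e))].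
by case=> e; [apply: col1 | apply: col2].
Qed.

Lemma preserves_union k :
  preserves (aunion o1 o2) k = preserves o1 (k \o inl) && preserves o2 (k \o inr).
Proof.
apply/forallP/andP => [col | [/forallP col1 /forallP col2]].
  by split; apply/forallP => e; [apply: (col (inl e)) | apply: (col (inr e))].
by case=> e; [apply: col1 | apply: col2].
Qed.

Lemma colors_union k :
  [seq k v | v : svert (gunion G1 G2)]
  = [seq k (inl v) | v : svert G1] ++ [seq k (inr v) | v : svert G2].
Proof. by rewrite /image_mem !enumT unlock /= /sum_enum map_cat -!map_comp !unlock. Qed.

Lemma Ycoloring_union m k :
  Ycoloring (aunion o1 o2) m k
  = (\sum_(p <- splits m)
       Ycoloring o1 p.1 (k \o inl) * Ycoloring o2 p.2 (k \o inr))%N :> nat.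
Proof.
rewrite /Ycoloring; under eq_bigr => p _ do rewrite !andbA.
by rewrite sum_splits proper_union preserves_union colors_union andbA andbACA -andbA.
Qed.

Lemma Ycoef_union m :
  Ycoef (aunion o1 o2) m = (\sum_(p <- splits m) Ycoef o1 p.1 * Ycoef o2 p.2)%N.
Proof.
have join_l (k1 : {ffun svert G1 -> seq_sub m}) (k2 : {ffun svert G2 -> seq_sub m}) :
    (fun v => ssval (ffun_join k1 k2 v)) \o inl = (fun v => ssval (k1 v)).
  by apply: functional_extensionality => v; rewrite /= ffunE.
have join_r (k1 : {ffun svert G1 -> seq_sub m}) (k2 : {ffun svert G2 -> seq_sub m}) :
    (fun v => ssval (ffun_join k1 k2 v)) \o inr = (fun v => ssval (k2 v)).
  by apply: functional_extensionality => v; rewrite /= ffunE.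
rewrite -[LHS]/(Ycoef_in _ m m) Ycoef_in_sum big_ffun_sumType /=.
under eq_bigr => k1 _ do under eq_bigr => k2 _ do rewrite Ycoloring_union join_l join_r.
under eq_bigr => k1 _ do rewrite exchange_big /=.
rewrite exchange_big /=; apply: eq_big_seq => p /perm_splits/perm_mem split_p.
have [sub1 sub2] : {subset p.1 <= m} /\ {subset p.2 <= m}.
  by split=> x x_p; rewrite -split_p mem_cat x_p ?orbT.
by rewrite -big_distrlr /= -!Ycoef_in_sum !Ycoef_inE.
Qed.

Lemma Y_union : Y (aunion o1 o2) = smul (Y o1) (Y o2).
Proof.
apply: functional_extensionality => m.
by rewrite /Y /smul Ycoef_union natr_sum; apply: eq_bigr => p _; rewrite natrM.
Qed.

Lemma is_sink_inl v : is_sink (aunion o1 o2) (inl v) = is_sink o1 v.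
Proof.
apply/forallP/forallP => [sink e | sink [e|e]]; apply/forallP => c //.
  exact: forallP (sink (inl e)) c.
exact: forallP (sink e) c.
Qed.

Lemma is_sink_inr v : is_sink (aunion o1 o2) (inr v) = is_sink o2 v.
Proof.
apply/forallP/forallP => [sink e | sink [e|e]]; apply/forallP => c //.
  exact: forallP (sink (inr e)) c.
exact: forallP (sink e) c.
Qed.

Lemma nsinks_union : nsinks (aunion o1 o2) = (nsinks o1 + nsinks o2)%N.
Proof.
rewrite !nsinksE big_sumType.
by congr addn; apply: eq_bigr => v _; rewrite ?is_sink_inl ?is_sink_inr.
Qed.

Lemma path_on_left (s : sedge (gunion G1 G2) * bool) p :
  path (fun s t => step_dst s == step_src t) s p ->
  all (fun t => on_left t == on_left s) p.
Proof.
elim: p s => [|t p IHp] s //= /andP[s_t /IHp side_p].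
have side_t : on_left t = on_left s.
  by move: s_t; case: s t {side_p} => [[e|e] c] [[e'|e'] c'].
by rewrite side_t eqxx -side_t.
Qed.

Lemma closed_walk_union (w : seq (sedge (gunion G1 G2) * bool)) : closed_walk w ->
  (exists w1, w = [seq (inl s.1, s.2) | s <- w1]) \/
  (exists w2, w = [seq (inr s.1, s.2) | s <- w2]).
Proof.
case: w => [|s w] // /andP[_ /path_on_left]; rewrite all_rcons eqxx /= => side_w.
case side_s: (on_left s) in side_w.
  by left; apply: all_on_left; rewrite /= side_s; apply/allP => t /(allP side_w)/eqP.
right; apply: all_on_right; rewrite /= side_s.
by apply/allP => t /(allP side_w)/eqP /= ->.
Qed.

Lemma acyclic_union : acyclic o1 -> acyclic o2 -> acyclic (aunion o1 o2).
Proof.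
move=> acyc1 acyc2 w cyc_w.
have [[w1 def_w] | [w2 def_w]] := closed_walk_union cyc_w.1; rewrite def_w in cyc_w.
  by apply: (acyc1 w1); apply: is_cycle_map cyc_w => // ? ? [].
by apply: (acyc2 w2); apply: is_cycle_map cyc_w => // ? ? [].
Qed.

Lemma signed_poset_union :
  signed_poset o1 -> signed_poset o2 -> signed_poset (aunion o1 o2).
Proof.
move=> [orient1 acyc1] [orient2 acyc2]; split; last exact: acyclic_union.
by case=> e; [apply: orient1 | apply: orient2].
Qed.

End Union.

Record poset := Poset {
  poset_graph : sgraph;
  poset_arrows : arrows poset_graph;
  posetP : signed_poset poset_arrows }.
Arguments poset_arrows : clear implicits.

Definition poset_union (P Q : poset) : poset :=
  Poset (signed_poset_union (posetP P) (posetP Q)).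

(* Combinations are indexed by a finite type rather than by a list of posets: [poset]
   lives in a universe too large for the index types of the bigop lemmas. *)
Definition lincomb (I : finType) (a : I -> rat) (P : I -> poset) : series :=
  fun m => \sum_i a i * Y (poset_arrows (P i)) m.

Lemma lincomb_enum_val (I : finType) (a : I -> rat) (P : I -> poset) :
  lincomb a P = lincomb (a \o @enum_val I I) (P \o @enum_val I I).
Proof.
by apply: functional_extensionality => m; rewrite /lincomb (big_enum_val (A := I)).
Qed.

Lemma inY_lincomb (f : series) :
  inY f <-> exists (I : finType) (a : I -> rat) (P : I -> poset), f = lincomb a P.
Proof.
split=> [[n [a [G [o [o_poset ->]]]]] | [I [a [P ->]]]].
  by exists 'I_n, a, (fun i => Poset (o_poset i)).
rewrite lincomb_enum_val.
by exists #|I|, (a \o enum_val), (fun i => poset_graph (P (enum_val i))),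
  (fun i => poset_arrows (P (enum_val i))); split=> // i; apply: posetP.
Qed.

Lemma lincomb_inY (I : finType) (a : I -> rat) (P : I -> poset) : inY (lincomb a P).
Proof. by apply/inY_lincomb; exists I, a, P. Qed.

Lemma smul_lincomb (I J : finType) (a : I -> rat) (P : I -> poset)
    (b : J -> rat) (Q : J -> poset) :
  smul (lincomb a P) (lincomb b Q)
  = lincomb (fun ij => a ij.1 * b ij.2) (fun ij => poset_union (P ij.1) (Q ij.2)).
Proof.
apply: functional_extensionality => m; rewrite /smul /lincomb.
under eq_bigr => p _ do rewrite big_distrlr /=.
rewrite exchange_big /=; under eq_bigr => i _ do rewrite exchange_big /=.
rewrite pair_bigA /=; apply: eq_bigr => -[i j] _ /=.
by rewrite Y_union /smul big_distrr /=; apply: eq_bigr => p _; rewrite mulrACA.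
Qed.

Section SinkSpecialization.
Variable phi : series -> {poly rat}.
Hypothesis phi_linear : forall (a : rat) (f g : series), inY f -> inY g ->
  phi (fun m => a * f m + g m) = a *: phi f + phi g.
Hypothesis phi_Y : forall (G : sgraph) (o : arrows G), signed_poset o ->
  phi (Y o) = 'X^(nsinks o).

Lemma phi_lincomb_ord (n : nat) (a : 'I_n -> rat) (P : 'I_n -> poset) :
  phi (lincomb a P) = \sum_i a i *: 'X^(nsinks (poset_arrows (P i))).
Proof.
have phi_lc_linear c (I J : finType) (a1 : I -> rat) P1 (a2 : J -> rat) P2 :
    phi (fun m => c * lincomb a1 P1 m + lincomb a2 P2 m)
    = c *: phi (lincomb a1 P1) + phi (lincomb a2 P2).
  exact: phi_linear (lincomb_inY _ _) (lincomb_inY _ _).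
elim: n a P => [|n IHn] a P.
  have lc0 : lincomb a P = (fun m => -1 * lincomb a P m + lincomb a P m).
    by apply: functional_extensionality => m; rewrite mulN1r addNr /lincomb big_ord0.
  by rewrite big_ord0 lc0 phi_lc_linear scaleN1r addNr.
have Y_lc : Y (poset_arrows (P ord0)) = lincomb (fun _ : 'I_1 => 1) (fun _ => P ord0).
  by apply: functional_extensionality => m; rewrite /lincomb big_ord1 mul1r.
pose a' (i : 'I_n) := a (lift ord0 i); pose P' (i : 'I_n) := P (lift ord0 i).
have lc_rec : lincomb a P
    = (fun m => a ord0 * Y (poset_arrows (P ord0)) m + lincomb a' P' m).
  by apply: functional_extensionality => m; rewrite /lincomb big_ord_recl.
by rewrite lc_rec Y_lc phi_lc_linear -Y_lc (phi_Y (posetP _)) IHn big_ord_recl.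
Qed.

Lemma phi_lincomb (I : finType) (a : I -> rat) (P : I -> poset) :
  phi (lincomb a P) = \sum_i a i *: 'X^(nsinks (poset_arrows (P i))).
Proof. by rewrite lincomb_enum_val phi_lincomb_ord (big_enum_val (A := I)). Qed.

End SinkSpecialization.

Theorem mainTheorem9 :
  (forall (G1 G2 : sgraph) (o1 : arrows G1) (o2 : arrows G2),
     signed_poset o1 -> signed_poset o2 ->
     Y (aunion o1 o2) = smul (Y o1) (Y o2)) /\
  (forall f g : series, inY f -> inY g -> inY (smul f g)) /\
  (forall phi : series -> {poly rat},
     (forall (a : rat) (f g : series), inY f -> inY g ->
        phi (fun m => a * f m + g m) = a *: phi f + phi g) ->
     (forall (G : sgraph) (o : arrows G), signed_poset o ->
        phi (Y o) = 'X^(nsinks o)) ->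
     forall f g : series, inY f -> inY g -> phi (smul f g) = phi f * phi g).
Proof.
split=> [G1 G2 o1 o2 _ _|]; first exact: Y_union.
split=> [f g | phi phi_linear phi_Y f g];
  move=> /inY_lincomb[I [a [P ->]]] /inY_lincomb[J [b [Q ->]]].
  by rewrite smul_lincomb; apply: lincomb_inY.
rewrite smul_lincomb !(phi_lincomb phi_linear phi_Y) big_distrlr pair_bigA /=.
apply: eq_bigr => -[i j] _ /=.
by rewrite nsinks_union exprD -scalerAl -scalerAr scalerA.
Qed.
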